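(* Let $E$ be a separable Banach space over $K$ and let $X=(X_1,\dots,X_n)$ be a vector of independent, identically distributed, $E$-valued $K$-Gaussian random variables. Let $\{\alpha_1,\dots,\alpha_m\}$ be an orthogonal set in $K^n$, where $\alpha_j=(\alpha_{j,1},\dots,\alpha_{j,n})$, and let $A$ be the $n\times m$ matrix whose $j$-th column is $\alpha_j$. Then $Y=XA$, i.e. $Y_j=\sum_{i=1}^n\alpha_{j,i}X_i$ for $1\le j\le m$, is a vector of independent $K$-Gaussian random variables.
   Context: $K$ is a local field (locally compact, non-discrete, totally disconnected topological field) with its non-archimedean absolute value $|\cdot|$ ($|x|=0\iff x=0$, $|xy|=|x||y|$, $|x+y|\le|x|\vee|y|$). A normed space over $K$ is a $K$-vector space with $\|\cdot\|$ satisfying $\|x\|=0\iff x=0$, $\|\alpha x\|=|\alpha|\|x\|$, $\|x+y\|\le\|x\|\vee\|y\|$; a Banach space if complete. $K^n$ has norm $|(x_1,\dots,x_n)|=|x_1|\vee\dots\vee|x_n|$. A subset $F$ of a normed space is orthogonal if $\|\sum_{i=1}^k\beta_ix_i\|=\bigvee_{i=1}^k|\beta_i|\|x_i\|$ for all finite $\{x_1,\dots,x_k\}\subset F$ and $\beta_i\in K$; orthonormal if moreover each element has norm $1$. For a separable Banach space $E$ over $K$, an $E$-valued random variable $X$ is $K$-Gaussian if whenever $X_1,X_2$ are independent copies of $X$ and $(\alpha_{11},\alpha_{12}),(\alpha_{21},\alpha_{22})$ is an orthonormal pair in $K^2$, $(\alpha_{11}X_1+\alpha_{12}X_2,\alpha_{21}X_1+\alpha_{22}X_2)$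 has the same law as $(X_1,X_2)$. *)

From HB Require Import structures.
From mathcomp Require Import all_boot all_order all_algebra.
From mathcomp Require Import all_classical all_reals all_analysis.
Set Implicit Arguments. Unset Strict Implicit. Unset Printing Implicit Defensive.
Import Order.TTheory GRing.Theory Num.Theory.
Local Open Scope classical_set_scope.
Local Open Scope ring_scope.

Section Defs.
Variable R : realType.

Definition nonarch_abs (K : fieldType) (absK : K -> R) : Prop :=
  [/\ forall x, 0 <= absK x,
      forall x, absK x = 0 <-> x = 0,
      forall x y, absK (x * y) = absK x * absK y &
      forall x y, absK (x + y) <= Num.max (absK x) (absK y)].

(** Compactness of a
    closed ball is written as sequential compactness (equivalent in metric
    spaces).  Total disconnectedness is automatic for an ultrametric
    topology. *)
Definition local_field (K : fieldType) (absK : K -> R) : Prop :=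
  [/\ nonarch_abs absK,
      (forall e : R, 0 < e -> exists x : K, x != 0 /\ absK x < e) &
      (forall x0 : K, exists r : R, 0 < r /\
         forall u : nat -> K, (forall k, absK (u k - x0) <= r) ->
         exists (phi : nat -> nat) (l : K),
           (forall k, (phi k < phi k.+1)%N) /\ absK (l - x0) <= r /\
           forall e : R, 0 < e -> exists N, forall k, (N <= k)%N ->
             absK (u (phi k) - l) < e)].

Definition is_norm (K : fieldType) (absK : K -> R) (E : lmodType K)
  (nE : E -> R) : Prop :=
  [/\ forall x, nE x = 0 <-> x = 0,
      forall (a : K) x, nE (a *: x) = absK a * nE x &
      forall x y, nE (x + y) <= Num.max (nE x) (nE y)].

Definition complete_norm (K : fieldType) (E : lmodType K) (nE : E -> R) :=
  forall u : nat -> E,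
    (forall e : R, 0 < e -> exists N, forall p q, (N <= p)%N -> (N <= q)%N ->
        nE (u p - u q) < e) ->
    exists l : E, forall e : R, 0 < e -> exists N, forall p, (N <= p)%N ->
        nE (u p - l) < e.

Definition separable_norm (K : fieldType) (E : lmodType K) (nE : E -> R) :=
  exists d : nat -> E, forall (x : E) (e : R), 0 < e -> exists k, nE (x - d k) < e.

Definition sep_banach (K : fieldType) (absK : K -> R) (E : lmodType K)
  (nE : E -> R) : Prop :=
  [/\ is_norm absK nE, complete_norm nE & separable_norm nE].

Definition nopen (T : zmodType) (nE : T -> R) (A : set T) : Prop :=
  forall x, A x -> exists e : R, 0 < e /\ forall y, nE (y - x) < e -> A y.

Definition borel (T : zmodType) (nE : T -> R) : set (set T) :=
  <<s [set A | nopen nE A] >>.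

Definition borel2 (T : zmodType) (nE : T -> R) : set (set (T * T)) :=
  <<s [set B1 `*` B2 | B1 in borel nE & B2 in borel nE] >>.

Definition rv (T : zmodType) (nE : T -> R) d (Omega : measurableType d)
  (X : Omega -> T) : Prop :=
  forall B, borel nE B -> measurable (X @^-1` B).

Definition indep (T : zmodType) (nE : T -> R) d (Omega : measurableType d)
  (P : probability Omega R) (I : finType) (X : I -> Omega -> T) : Prop :=
  forall B : I -> set T, (forall i, borel nE (B i)) ->
    P (\bigcap_(i in [set: I]) (X i @^-1` B i)) =
      (\prod_(i : I) P (X i @^-1` B i))%E.

Definition vnorm (K : fieldType) (absK : K -> R) (n : nat) (x : 'I_n -> K) : R :=
  \big[Num.max/0]_(i < n) absK (x i).

Definition K_orthogonal (K : fieldType) (absK : K -> R) (n m : nat)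
  (alpha : 'I_m -> 'I_n -> K) : Prop :=
  forall beta : 'I_m -> K,
    vnorm absK (fun i => \sum_(j < m) beta j * alpha j i) =
    \big[Num.max/0]_(j < m) (absK (beta j) * vnorm absK (alpha j)).

Definition K_orthonormal (K : fieldType) (absK : K -> R) (n m : nat)
  (alpha : 'I_m -> 'I_n -> K) : Prop :=
  K_orthogonal absK alpha /\ forall j, vnorm absK (alpha j) = 1.

Definition K_gaussian (K : fieldType) (absK : K -> R) (E : lmodType K)
  (nE : E -> R) d (Omega : measurableType d) (P : probability Omega R)
  (X : Omega -> E) : Prop :=
  rv nE X /\
  forall d' (Omega' : measurableType d') (P' : probability Omega' R)
         (X1 X2 : Omega' -> E),
    rv nE X1 -> rv nE X2 ->
    indep nE P' (fun i : 'I_2 => if val i == 0%N then X1 else X2) ->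
    (forall B, borel nE B -> P' (X1 @^-1` B) = P (X @^-1` B)) ->
    (forall B, borel nE B -> P' (X2 @^-1` B) = P (X @^-1` B)) ->
    forall a : 'I_2 -> 'I_2 -> K, K_orthonormal absK a ->
    forall C, borel2 nE C ->
      P' ((fun w => (a 0 0 *: X1 w + a 0 1 *: X2 w,
                     a 1 0 *: X1 w + a 1 1 *: X2 w)) @^-1` C) =
      P' ((fun w => (X1 w, X2 w)) @^-1` C).

End Defs.

(* Transvections a_l := a_l - r a_k with |r| <= 1 are isometries of K^n for
   the sup-norm, and an ultrametric Gaussian elimination with maximal pivots
   uses them to bring any orthogonal family to multiples of distinct unit
   vectors, plus zero vectors.  On the random side, transposing such a
   transvection replaces X_k by X_k + r X_l; this keeps the family i.i.d.
   K-Gaussian, since (1, 0), (r, 1) is an orthonormal pair of K^2, so that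
   (X_l, X_k + r X_l) has the law of (X_l, X_k), and independence from the
   other coordinates extends from rectangles to sigma(X_l, X_k) by uniqueness
   of measures on pi-systems.  Thus Y consists of nonzero multiples of distinct
   coordinates of an i.i.d. K-Gaussian vector, and of zero constants. *)

From HB Require Import structures.
From mathcomp Require Import all_boot all_order all_algebra.
From mathcomp Require Import all_classical all_reals all_analysis.
From mathcomp Require Import ring.
Set Implicit Arguments. Unset Strict Implicit. Unset Printing Implicit Defensive.
Import Order.TTheory GRing.Theory Num.Theory.
Local Open Scope classical_set_scope.
Local Open Scope ring_scope.

Definition extend_last T m (f : 'I_m -> T) (x : T) (j : 'I_m.+1) : T :=
  if unlift ord_max j is Some j' then f j' else x.

Lemma extend_last_max T m (f : 'I_m -> T) x : extend_last f x ord_max = x.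
Proof. by rewrite /extend_last unlift_none. Qed.

Lemma widen_ord_max m (j : 'I_m) : widen_ord (leqnSn m) j = lift ord_max j.
Proof. by apply: val_inj; rewrite /= /bump leqNgt ltn_ord. Qed.

Lemma extend_last_widen T m (f : 'I_m -> T) x j :
  extend_last f x (widen_ord (leqnSn m) j) = f j.
Proof. by rewrite /extend_last widen_ord_max liftK. Qed.

Lemma widen_or_max m (j : 'I_m.+1) :
  j = ord_max \/ exists j', j = widen_ord (leqnSn m) j'.
Proof.
by case: (unliftP ord_max j) => [j' ->|->]; [right; exists j'; rewrite widen_ord_max | left].
Qed.

Lemma ord2_cases (j : 'I_2) : j = ord0 \/ j = ord_max.
Proof. by case: j => [[|[|]]] // ?; [left | right]; apply: val_inj. Qed.

Lemma sum_ord2 (V : zmodType) (F : 'I_2 -> V) : \sum_(i < 2) F i = F ord0 + F ord_max.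
Proof. by rewrite big_ord_recl big_ord1; congr (_ + F _); apply: val_inj. Qed.

(* [0] is not neutral for [Num.max] on [R], so [big_ord_recr] does not apply. *)
Lemma bigmax2 (R : realType) (F : 'I_2 -> R) : (forall i, 0 <= F i) ->
  \big[Num.max/0]_(i < 2) F i = Num.max (F ord0) (F ord_max).
Proof.
move=> F0; apply/eqP; rewrite eq_le ge_max !le_bigmax !andbT.
apply: bigmax_le => [|i _]; first by rewrite le_max F0.
by case: (ord2_cases i) => ->; rewrite le_max lexx ?orbT.
Qed.

Lemma sum_split2 (V : zmodType) (I : finType) (F : I -> V) (i k : I) : i != k ->
  \sum_l F l = F i + F k + \sum_(l | (l != i) && (l != k)) F l.
Proof.
move=> ik; rewrite (bigD1 i) // (bigD1 k) 1?eq_sym //= addrA.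
by congr (_ + _); apply: eq_bigl => l; rewrite andbC.
Qed.

Lemma sum_monomial (K : fieldType) (V : lmodType K) n (o : option 'I_n) (x : K)
    (Z : 'I_n -> V) :
  \sum_i (if o == Some i then x else 0) *: Z i = if o is Some k then x *: Z k else 0.
Proof.
case: o => [k|]; last by rewrite big1 // => i _; rewrite scale0r.
rewrite (bigD1 k) //= eqxx big1 ?addr0 // => i ik.
by case: eqP => [[ki]|_]; [rewrite ki eqxx in ik | rewrite scale0r].
Qed.

Lemma big_option_reindex (V : Type) (idx : V) (op : Monoid.com_law idx)
    (I J : finType) (f : J -> option I) (G : I -> V) :
  (forall j j' i, f j = Some i -> f j' = Some i -> j = j') ->
  (forall i, (forall j, f j <> Some i) -> G i = idx) ->
  \big[op/idx]_j (if f j is Some i then G i else idx) = \big[op/idx]_i G i.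
Proof.
move=> finj G_idx.
transitivity (\big[op/idx]_j \big[op/idx]_i (if f j == Some i then G i else idx)).
  apply: eq_bigr => j _; case fj: (f j) => [i0|]; last by rewrite big1.
  rewrite (bigD1 i0) //= eqxx big1 ?Monoid.mulm1 // => i ni.
  by case: eqP => // -[ei]; rewrite ei eqxx in ni.
rewrite exchange_big; apply: eq_bigr => i _.
have [[j0 fj0]|nf] := pselect (exists j, f j = Some i).
  rewrite (bigD1 j0) /= ?fj0 ?eqxx // big1 ?Monoid.mulm1 // => j nj.
  by case: eqP => // /finj/(_ fj0) ej; rewrite ej eqxx in nj.
rewrite G_idx => [|j fj]; last by apply: nf; exists j.
by apply: big1 => j _; case: ifP.
Qed.

Lemma bigcap_split2 (T : Type) (I : eqType) (A : I -> set T) (i k : I) :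
  \bigcap_l A l = (A i `&` A k) `&` \bigcap_(l in [set l | (l != i) && (l != k)]) A l.
Proof.
apply/seteqP; split => [w Aw|w [[Ai Ak] Aw] l _]; first by split; [split | move=> l _]; apply: Aw.
case: (eqVneq l i) => [->//|li]; case: (eqVneq l k) => [->//|lk].
by apply: (Aw l); rewrite /= li lk.
Qed.

Section Ultrametric.
Variables (R : realType) (K : fieldType) (absK : K -> R).
Hypothesis hK : nonarch_abs absK.

Lemma absK_ge0 x : 0 <= absK x. Proof. by case: hK. Qed.
Lemma absK_eq0 x : absK x = 0 <-> x = 0. Proof. by case: hK. Qed.
Lemma absKM x y : absK (x * y) = absK x * absK y. Proof. by case: hK. Qed.
Lemma absKD_le x y : absK (x + y) <= Num.max (absK x) (absK y).
Proof. by case: hK. Qed.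

Lemma absK0 : absK 0 = 0. Proof. exact/absK_eq0. Qed.

Lemma absK_gt0 x : x != 0 -> 0 < absK x.
Proof.
by move=> x0; rewrite lt_def absK_ge0 andbT; apply: contra x0 => /eqP/absK_eq0 ->.
Qed.

Lemma absK1 : absK 1 = 1.
Proof.
apply: (mulIf (lt0r_neq0 (absK_gt0 (oner_neq0 K)))).
by rewrite -absKM !mul1r.
Qed.

Lemma absKN1 : absK (-1) = 1.
Proof.
apply/eqP; rewrite -(@eqrXn2 _ 2) ?absK_ge0 ?ler01 //.
by rewrite expr2 -absKM mulrNN mulr1 absK1 expr1n.
Qed.

Lemma absKN x : absK (- x) = absK x.
Proof. by rewrite -mulN1r absKM absKN1 mul1r. Qed.

Lemma absKB_le x y : absK (x - y) <= Num.max (absK x) (absK y).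
Proof. by rewrite -(absKN y) absKD_le. Qed.

Lemma absKV x : x != 0 -> absK x^-1 = (absK x)^-1.
Proof.
move=> x0; apply: (mulfI (lt0r_neq0 (absK_gt0 x0))).
by rewrite -absKM !mulfV ?absK1 ?lt0r_neq0 ?absK_gt0.
Qed.

Lemma absKD_eq x y : absK y < absK x -> absK (x + y) = absK x.
Proof.
move=> yx; apply/eqP; rewrite eq_le; apply/andP; split.
  by apply: le_trans (absKD_le x y) _; rewrite ge_max lexx ltW.
have := absKB_le (x + y) y; rewrite addrK le_max => /orP[//|xy].
by have := lt_le_trans yx xy; rewrite ltxx.
Qed.

Local Notation vn := (vnorm absK).

Lemma le_vnorm n (a : 'I_n -> K) i : absK (a i) <= vn a.
Proof. exact: le_bigmax. Qed.

Lemma vnorm_ge0 n (a : 'I_n -> K) : 0 <= vn a.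
Proof. exact: bigmax_ge_id. Qed.

Lemma vnorm_le n (a : 'I_n -> K) c :
  0 <= c -> (forall i, absK (a i) <= c) -> vn a <= c.
Proof. by move=> c0 ac; apply: bigmax_le. Qed.

Lemma K_orthogonal_coef_le n m (al : 'I_m -> 'I_n -> K) (b : 'I_m -> K) j :
  K_orthogonal absK al ->
  absK (b j) * vn (al j) <= vn (fun i => \sum_(j < m) b j * al j i).
Proof. by move=> oal; rewrite oal; apply: le_bigmax. Qed.

Lemma K_orthogonal_widen n m (al : 'I_m.+1 -> 'I_n -> K) :
  K_orthogonal absK al ->
  K_orthogonal absK (fun j : 'I_m => al (widen_ord (leqnSn m) j)).
Proof.
move=> oal b.
have -> : (fun i => \sum_(j < m) b j * al (widen_ord (leqnSn m) j) i) =
          (fun i => \sum_(j < m.+1) extend_last b 0 j * al j i).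
  apply: funext => i; rewrite big_ord_recr /= extend_last_max mul0r addr0.
  by apply: eq_bigr => j _; rewrite extend_last_widen.
rewrite oal; apply/eqP; rewrite eq_le; apply/andP; split.
  apply: bigmax_le => [|j _]; first exact: bigmax_ge_id.
  have [->|[j' ->]] := widen_or_max j.
    by rewrite extend_last_max absK0 mul0r bigmax_ge_id.
  by rewrite extend_last_widen; apply: le_bigmax.
apply: bigmax_le => [|j _]; first exact: bigmax_ge_id.
by apply: le_trans (le_bigmax _ _ (widen_ord (leqnSn m) j)); rewrite extend_last_widen.
Qed.

Definition transvection n (l k : 'I_n) (r : K) (a : 'I_n -> K) : 'I_n -> K :=
  fun i => if i == l then a l - r * a k else a i.

Lemma transvection_lincomb n m (l k : 'I_n) r (b : 'I_m -> K) al :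
  transvection l k r (fun i => \sum_(j < m) b j * al j i) =
  fun i => \sum_(j < m) b j * transvection l k r (al j) i.
Proof.
apply: funext => i; rewrite /transvection; case: eqP => // _.
by rewrite mulr_sumr -sumrB; apply: eq_bigr => j _; ring.
Qed.

Lemma vnorm_transvection_le n (l k : 'I_n) r a :
  absK r <= 1 -> vn (transvection l k r a) <= vn a.
Proof.
move=> r1; apply: vnorm_le => [|i]; first exact: vnorm_ge0.
rewrite /transvection; case: eqP => _; last exact: le_vnorm.
apply: le_trans (absKB_le _ _) _; rewrite ge_max le_vnorm absKM /=.
by rewrite -[leRHS]mul1r ler_pM ?absK_ge0 ?le_vnorm.
Qed.

Lemma transvectionK n (l k : 'I_n) r a :
  l != k -> transvection l k (- r) (transvection l k r a) = a.
Proof.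
move=> lk; apply: funext => i; rewrite /transvection; case: eqP => [->|//].
by rewrite eqxx eq_sym (negbTE lk); ring.
Qed.

Lemma vnorm_transvection n (l k : 'I_n) r a :
  l != k -> absK r <= 1 -> vn (transvection l k r a) = vn a.
Proof.
move=> lk r1; apply/eqP; rewrite eq_le vnorm_transvection_le //=.
by rewrite -[X in vn X <= _](transvectionK r a lk) vnorm_transvection_le ?absKN.
Qed.

Inductive elementary n : (('I_n -> K) -> 'I_n -> K) -> Prop :=
| elementary_id : elementary id
| elementary_transvection T l k r : elementary T -> l != k -> absK r <= 1 ->
    elementary (transvection l k r \o T).

Lemma elementary_comp n (T2 T1 : ('I_n -> K) -> 'I_n -> K) :
  elementary T2 -> elementary T1 -> elementary (T2 \o T1).
Proof.
move=> eT2 eT1; elim: eT2 => [|T l k r _ IH lk r1] //.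
exact: elementary_transvection.
Qed.

Lemma elementary_lincomb n m T (b : 'I_m -> K) (al : 'I_m -> 'I_n -> K) :
  elementary T ->
  T (fun i => \sum_(j < m) b j * al j i) = fun i => \sum_(j < m) b j * T (al j) i.
Proof. by elim=> [|T' l k r _ IH _ _] //=; rewrite IH transvection_lincomb. Qed.

Lemma vnorm_elementary n T (a : 'I_n -> K) : elementary T -> vn (T a) = vn a.
Proof. by elim=> [|T' l k r _ IH lk r1] //=; rewrite vnorm_transvection. Qed.

Lemma K_orthogonal_elementary n m T (al : 'I_m -> 'I_n -> K) :
  elementary T -> K_orthogonal absK al -> K_orthogonal absK (fun j => T (al j)).
Proof.
move=> eT oal b; rewrite -elementary_lincomb // vnorm_elementary // oal.
by apply: eq_bigr => j _; rewrite vnorm_elementary.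
Qed.

Lemma elementary_clear n (L : seq 'I_n) (k : 'I_n) (r : 'I_n -> K) :
  uniq L -> k \notin L -> (forall l, absK (r l) <= 1) ->
  exists2 T, elementary T &
    forall u, T u = fun i => if i \in L then u i - r i * u k else u i.
Proof.
elim: L => [|l L IH] /= uL kL r1; first by exists id => //; exact: elementary_id.
move: uL kL => /andP[lL uL]; rewrite inE negb_or => /andP[kl kL].
have [T eT TE] := IH uL kL r1.
exists (transvection l k (r l) \o T); first by apply: elementary_transvection; rewrite // eq_sym.
move=> u; apply: funext => i; rewrite /= /transvection !TE inE.
by rewrite (negbTE lL) (negbTE kL); case: eqVneq => [->|].
Qed.

Lemma clear_column n (v : 'I_n -> K) k :
  v k != 0 -> (forall l, absK (v l) <= absK (v k)) ->
  exists T, [/\ elementary T, T v = (fun i => if i == k then v k else 0)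
              & forall u, u k = 0 -> T u = u].
Proof.
move=> vk0 vk.
have r1 l : absK (v l / v k) <= 1.
  by rewrite absKM absKV // ler_pdivrMr ?mul1r ?absK_gt0.
have [||T eT TE] := @elementary_clear n (enum (predC1 k)) k (fun l => v l / v k) _ _ r1.
- exact: enum_uniq.
- by rewrite mem_enum inE eqxx.
exists T; split=> [//||u uk0]; rewrite TE; apply: funext => i; rewrite mem_enum inE.
  by case: eqVneq => [->|_] //; rewrite divfK // subrr.
by rewrite uk0 mulr0 subr0; case: eqP.
Qed.

Definition monomial_family n m (s : 'I_m -> option 'I_n) (c : 'I_m -> K)
    (be : 'I_m -> 'I_n -> K) : Prop :=
  [/\ forall j i, be j i = if s j == Some i then c j else 0,
      forall j k, s j = Some k -> c j != 0 &
      forall j j' k, s j = Some k -> s j' = Some k -> j = j'].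

Lemma monomial_family_last n m (s : 'I_m -> option 'I_n) c o x
    (be : 'I_m.+1 -> 'I_n -> K) :
  monomial_family s c (fun j => be (widen_ord (leqnSn m) j)) ->
  (forall i, be ord_max i = if o == Some i then x else 0) ->
  (forall k, o = Some k -> x != 0 /\ forall j, s j != Some k) ->
  monomial_family (extend_last s o) (extend_last c x) be.
Proof.
move=> [beE c0 sinj] bmax hnew; split.
- move=> j i; have [->|[j' ->]] := widen_or_max j.
    by rewrite !extend_last_max bmax.
  by rewrite !extend_last_widen beE.
- move=> j k; have [->|[j' ->]] := widen_or_max j.
    by rewrite !extend_last_max => /hnew[].
  by rewrite !extend_last_widen; apply: c0.
move=> j j' k; have [->|[j1 ->]] := widen_or_max j;
  have [->|[j2 ->]] := widen_or_max j';
  rewrite ?extend_last_max ?extend_last_widen // => E1 E2.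
- by have [_ /(_ j2)] := hnew _ E1; rewrite E2 eqxx.
- by have [_ /(_ j1)] := hnew _ E2; rewrite E1 eqxx.
- by rewrite (sinj _ _ _ E1 E2).
Qed.

(* Subtracting multiples of the monomial vectors kills the entries of the last
   vector on their support, and by orthogonality this cannot decrease its norm. *)
Lemma vnorm_le_offsupport n m (al : 'I_m.+1 -> 'I_n -> K) s c :
  K_orthogonal absK al ->
  monomial_family s c (fun j => al (widen_ord (leqnSn m) j)) ->
  vn (al ord_max) <=
  vn (fun i => if [exists j, s j == Some i] then 0 else al ord_max i).
Proof.
move=> oal [beE c0 sinj]; set v := al ord_max.
pose b := extend_last (fun j => if s j is Some k then - v k / c j else 0) 1.
have term j i : b (widen_ord (leqnSn m) j) * al (widen_ord (leqnSn m) j) i =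
                if s j == Some i then - v i else 0.
  rewrite /b extend_last_widen beE.
  case E: (s j) => [k|]; last by rewrite mul0r.
  by case: eqP => [[->]|_]; rewrite ?mulr0 // divfK ?(c0 _ _ E).
have -> : (fun i => if [exists j, s j == Some i] then 0 else v i) =
          (fun i => \sum_(j < m.+1) b j * al j i).
  apply: funext => i; rewrite big_ord_recr /= /b extend_last_max mul1r.
  rewrite (eq_bigr _ (fun j _ => term j i)); case: ifPn => [/existsP[j0 /eqP e0]|].
    rewrite (bigD1 j0) ?e0 ?eqxx //= big1 ?addr0 ?addNr // => j nj.
    by case: eqP => // /(sinj _ _ _)/(_ e0) ej; rewrite ej eqxx in nj.
  by rewrite negb_exists => /forallP h; rewrite big1 ?add0r // => j _; rewrite (negbTE (h j)).
by have := K_orthogonal_coef_le b ord_max oal; rewrite /b extend_last_max absK1 mul1r.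
Qed.

(* Pivot on a coordinate off the support where the last vector is largest; by
   [vnorm_le_offsupport] it is then largest among all coordinates. *)
Lemma monomial_family_step n m (al : 'I_m.+1 -> 'I_n -> K) s c :
  K_orthogonal absK al ->
  monomial_family s c (fun j => al (widen_ord (leqnSn m) j)) ->
  exists T s' c', elementary T /\ monomial_family s' c' (fun j => T (al j)).
Proof.
move=> oal mono; set v := al ord_max.
pose piv i := [exists j, s j == Some i].
have vw := vnorm_le_offsupport oal mono; rewrite -/v -/piv in vw.
have [[i1 /andP[ni1 vi1]]|] := pselect (exists i, ~~ piv i && (v i != 0)).
  have [k nk kmax] : exists2 k, ~~ piv k & forall l, ~~ piv l -> absK (v l) <= absK (v k).
    by case: (@arg_maxP _ _ _ i1 (fun i => ~~ piv i) (fun i => absK (v i)) ni1) => k; exists k.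
  have vk l : absK (v l) <= absK (v k).
    apply: le_trans (le_vnorm v l) (le_trans vw (vnorm_le (absK_ge0 _) _)) => i.
    by case: ifPn => [_|/kmax //]; rewrite absK0 absK_ge0.
  have vk0 : v k != 0.
    by apply: contraTneq (lt_le_trans (absK_gt0 vi1) (vk i1)) => ->; rewrite absK0 ltxx.
  have [T [eT Tv Tid]] := clear_column vk0 vk.
  exists T, (extend_last s (Some k)), (extend_last c (v k)); split => //.
  have skN j : s j != Some k by move: nk; rewrite /piv negb_exists => /forallP.
  apply: monomial_family_last => /= [|i|_ [<-] //].
    have [alE _ _] := mono.
    rewrite (_ : (fun j => _) = (fun j => al (widen_ord (leqnSn m) j))) //.
    by apply: funext => j; apply: Tid; rewrite alE (negbTE (skN j)).
  by rewrite -/v Tv /= eq_sym.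
move=> noff; exists id, (extend_last s None), (extend_last c 0).
split; first exact: elementary_id.
apply: monomial_family_last => //= i.
apply/absK_eq0/eqP; rewrite eq_le absK_ge0 andbT.
apply: le_trans (le_vnorm v i) (le_trans vw (vnorm_le (lexx 0) _)) => i'.
case: ifPn => [_|pi']; first by rewrite absK0.
by have [->|vi'] := eqVneq (v i') 0; [rewrite absK0 | case: noff; exists i'; rewrite pi'].
Qed.

Lemma K_orthogonal_monomial n m (al : 'I_m -> 'I_n -> K) :
  K_orthogonal absK al ->
  exists T s c, elementary T /\ monomial_family s c (fun j => T (al j)).
Proof.
elim: m al => [|m IH] al oal.
  by exists id, (fun _ => None), (fun _ => 0); split; [exact: elementary_id | split; case].
have [T1 [s [c [eT1 mono]]]] := IH _ (K_orthogonal_widen oal).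
have [T2 [s' [c' [eT2 mono']]]] :=
  monomial_family_step (K_orthogonal_elementary eT1 oal) mono.
by exists (T2 \o T1), s', c'; split; first exact: elementary_comp.
Qed.

Definition shear (s : K) : 'I_2 -> 'I_2 -> K :=
  fun j i => if val j == 0%N then (if val i == 0%N then 1 else 0)
             else (if val i == 0%N then s else 1).

Lemma shear_orthonormal s : absK s <= 1 -> K_orthonormal absK (shear s).
Proof.
move=> s1.
have vn2 (a : 'I_2 -> K) : vn a = Num.max (absK (a ord0)) (absK (a ord_max)).
  by rewrite /vnorm bigmax2 // => i; apply: absK_ge0.
have v0 : vn (shear s ord0) = 1.
  by rewrite vn2 /shear /= absK1 absK0 max_l ?ler01.
have v1 : vn (shear s ord_max) = 1 by rewrite vn2 /shear /= absK1 max_r.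
split=> [b|j]; last first.
  by case: (ord2_cases j) => ->.
rewrite vn2 bigmax2 => [|j]; last by rewrite mulr_ge0 ?absK_ge0 ?vnorm_ge0.
rewrite v0 v1 !mulr1 !sum_ord2 /shear /= !mulr1 !mulr0 add0r.
have bs : absK (b ord_max * s) <= absK (b ord_max).
  by rewrite absKM -[leRHS]mulr1 ler_wpM2l ?absK_ge0.
have [b01|b10] := lerP (absK (b ord0)) (absK (b ord_max)).
  by apply/max_idPr; apply: le_trans (absKD_le _ _) _; rewrite ge_max b01.
by rewrite absKD_eq ?(le_lt_trans bs) //; apply/max_idPl/ltW.
Qed.

End Ultrametric.

Section Borel.
Variables (R : realType) (E : zmodType) (nE : E -> R).

Lemma borel_nopen A : nopen nE A -> borel nE A.
Proof. exact: sub_gen_smallest. Qed.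

(* [borel nE] is the measurable-set predicate of [g_sigma_algebraType (nopen nE)]. *)
Lemma borelT : borel nE setT.
Proof. exact: (@measurableT _ (g_sigma_algebraType (nopen nE))). Qed.

Lemma borelI A B : borel nE A -> borel nE B -> borel nE (A `&` B).
Proof. exact: (@measurableI _ (g_sigma_algebraType (nopen nE))). Qed.

Lemma rv_nopen d (T : measurableType d) (U : T -> E) :
  (forall A, nopen nE A -> measurable (U @^-1` A)) -> rv nE U.
Proof.
move=> hU B hB; rewrite -[_ @^-1` _]setTI.
apply: (smallest_sub (sigma_algebra_image U (@sigma_algebra_measurable _ T)) _ hB).
by move=> A /hU; rewrite /image_set_system /= setTI.
Qed.

Lemma rv_pair d (T : measurableType d) (U V : T -> E) C :
  rv nE U -> rv nE V -> borel2 nE C -> measurable ((fun w => (U w, V w)) @^-1` C).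
Proof.
move=> rU rV hC; rewrite -[_ @^-1` _]setTI.
apply: (smallest_sub (sigma_algebra_image _ (@sigma_algebra_measurable _ T)) _ hC).
move=> _ [B1 hB1 [B2 hB2 <-]]; rewrite /image_set_system /= setTI.
exact: measurableI (rU _ hB1) (rV _ hB2).
Qed.

Lemma rv_cst d (T : measurableType d) (x : E) : rv nE (fun _ : T => x).
Proof.
move=> B _; have [Bx|nBx] := pselect (B x).
  by rewrite (_ : _ @^-1` _ = setT) //; apply/seteqP; split.
by rewrite (_ : _ @^-1` _ = set0) //; apply/seteqP; split.
Qed.

End Borel.

Section NormedSpace.
Variables (R : realType) (K : fieldType) (absK : K -> R) (E : lmodType K) (nE : E -> R).
Hypotheses (hK : nonarch_abs absK) (hE : is_norm absK nE).

Lemma nE_eq0 x : nE x = 0 <-> x = 0. Proof. by case: hE. Qed.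
Lemma nEZ a x : nE (a *: x) = absK a * nE x. Proof. by case: hE. Qed.
Lemma nED_le x y : nE (x + y) <= Num.max (nE x) (nE y). Proof. by case: hE. Qed.
Lemma nE0 : nE 0 = 0. Proof. exact/nE_eq0. Qed.
Lemma nEN x : nE (- x) = nE x. Proof. by rewrite -scaleN1r nEZ absKN1 ?mul1r. Qed.

Lemma nE_ge0 x : 0 <= nE x.
Proof. by have := nED_le x (- x); rewrite subrr nE0 nEN maxxx. Qed.

Lemma nE_subC x y : nE (x - y) = nE (y - x). Proof. by rewrite -nEN opprB. Qed.

Lemma nE_sub_trans x y z : nE (x - z) <= Num.max (nE (x - y)) (nE (y - z)).
Proof. by rewrite -[x - z](subrKA y) nED_le. Qed.

Definition nball (x : E) (r : R) := [set y | nE (y - x) < r].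

Lemma nopen_nball x r : nopen nE (nball x r).
Proof.
move=> y xy; exists r; split; first exact: le_lt_trans (nE_ge0 _) xy.
by move=> z zy; rewrite /nball /= (le_lt_trans (nE_sub_trans _ y _)) // gt_max zy.
Qed.

Local Notation rad q := (q.+1%:R^-1 : R).

(* By the ultrametric inequality, any point of a ball is one of its centres. *)
Lemma lincomb_nopen_cover (dense : nat -> E) (A : set E) (s t : K) x y :
  (forall x (e : R), 0 < e -> exists p, nE (x - dense p) < e) ->
  nopen nE A -> A (s *: x + t *: y) ->
  exists p p' q, [/\ nball (dense p) (rad q) x, nball (dense p') (rad q) y &
    forall x' y', nball (dense p) (rad q) x' -> nball (dense p') (rad q) y' ->
      A (s *: x' + t *: y')].
Proof.
move=> dense_approx oA Axy; have [e [e0 eA]] := oA _ Axy.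
pose M := Num.max (absK s) (absK t) + 1.
have M0 : 0 < M by rewrite ltr_wpDl // le_max absK_ge0.
pose q := Num.truncn (M / e).
have radq : rad q * M < e.
  by rewrite mulrC ltr_pdivrMr // -ltr_pdivrMl // [_ * M]mulrC /q truncnS_gt.
have rad0 : 0 < rad q by rewrite invr_gt0.
have [p xp] := dense_approx x _ rad0; have [p' yp'] := dense_approx y _ rad0.
exists p, p', q; split => // x' y' x'p y'p'; apply: eA.
have near (a : K) z z' : absK a <= Num.max (absK s) (absK t) ->
    nE (z' - z) < rad q -> nE (a *: z' - a *: z) < e.
  move=> aM zz'; rewrite -scalerBr nEZ; apply: le_lt_trans radq.
  rewrite mulrC ler_pM ?absK_ge0 ?nE_ge0 ?ltW //.
  by rewrite (le_lt_trans aM) // ltrDl.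
have -> : s *: x' + t *: y' - (s *: x + t *: y) = (s *: x' - s *: x) + (t *: y' - t *: y).
  by rewrite opprD addrACA.
rewrite (le_lt_trans (nED_le _ _)) // gt_max.
rewrite !near ?le_max ?lexx ?orbT //.
  by rewrite (le_lt_trans (nE_sub_trans _ (dense p') _)) // gt_max y'p' nE_subC.
by rewrite (le_lt_trans (nE_sub_trans _ (dense p) _)) // gt_max x'p nE_subC.
Qed.

Lemma rv_lincomb d (T : measurableType d) (U V : T -> E) (s t : K) :
  separable_norm nE -> rv nE U -> rv nE V -> rv nE (fun w => s *: U w + t *: V w).
Proof.
move=> [dense dense_approx] rU rV; apply: rv_nopen => A oA.
pose good p p' q := `[< forall x' y', nball (dense p) (rad q) x' ->
  nball (dense p') (rad q) y' -> A (s *: x' + t *: y') >].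
have -> : (fun w => s *: U w + t *: V w) @^-1` A =
    \bigcup_p \bigcup_p' \bigcup_q
      (if good p p' q then U @^-1` nball (dense p) (rad q) `&`
                           V @^-1` nball (dense p') (rad q) else set0).
  apply/seteqP; split => w.
    move=> /(lincomb_nopen_cover dense_approx oA)[p [p' [q [Up Vp' cover]]]].
    exists p => //; exists p' => //; exists q => //.
    by rewrite /good; case: asboolP.
  move=> [p _ [p' _ [q _]]]; rewrite /good; case: asboolP => // cover [Up Vp'].
  exact: cover.
do 3 (apply: bigcupT_measurable => ?); case: ifP => _ //.
by apply: measurableI; [apply: rU | apply: rV]; apply: borel_nopen; apply: nopen_nball.
Qed.

End NormedSpace.

Lemma measure_eq_offnull d (T : measurableType d) (R : realType)
    (mu : {measure set T -> \bar R}) (A B N : set T) :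
  measurable A -> measurable B -> measurable N -> mu N = 0%E ->
  A `\` N = B `\` N -> mu A = mu B.
Proof.
move=> mA mB mN N0 AB.
rewrite (measureDI mu mA mN) (measureDI mu mB mN) AB; congr (_ + _)%E.
by rewrite !(subset_measure0 _ mN _ N0) //; exact: measurableI.
Qed.

Section Independence.
Variables (R : realType) (E : zmodType) (nE : E -> R).
Variables (d : measure_display) (Omega : measurableType d) (P : probability Omega R).

Lemma indep_reindex (I J : finType) (X : I -> Omega -> E) (f : J -> option I)
    (g : J -> E -> E) (x0 : J -> E) :
  indep nE P X ->
  (forall j j' i, f j = Some i -> f j' = Some i -> j = j') ->
  (forall j B, borel nE B -> borel nE (g j @^-1` B)) ->
  indep nE P (fun j => if f j is Some i then g j \o X i else cst (x0 j)).
Proof.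
move=> hX finj gB B hB.
have [[j [fj nBj]]|Bx0] := pselect (exists j, f j = None /\ ~ B j (x0 j)).
  rewrite (bigD1 j) //= fj (_ : _ @^-1` _ = set0) ?measure0 ?mul0e; last first.
    by apply/seteqP; split.
  rewrite (_ : \bigcap__ _ = set0) ?measure0 //; apply/seteqP; split => // w.
  by move=> /(_ j Logic.I); rewrite /= fj.
pose B' i := if [pick j | f j == Some i] is Some j then g j @^-1` B j else setT.
have B'E j i : f j = Some i -> B' i = g j @^-1` B j.
  move=> fj; rewrite /B'; case: pickP => [j' /eqP fj'|/(_ j)]; last by rewrite fj eqxx.
  by rewrite (finj _ _ _ fj' fj).
have -> : \bigcap_j (if f j is Some i then g j \o X i else cst (x0 j)) @^-1` B j =
          \bigcap_i X i @^-1` B' i.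
  apply/seteqP; split => w Yw i _.
    rewrite /B'; case: pickP => [j /eqP fj|//].
    by have := Yw j Logic.I; rewrite /= fj.
  case fi: (f i) => [i'|] /=; first by have := Yw i' Logic.I; rewrite (B'E _ _ fi).
  by apply: contrapT => nB; apply: Bx0; exists i.
rewrite hX => [|i]; last by rewrite /B'; case: pickP => [j _|_]; [apply: gB | apply: borelT].
rewrite -(@big_option_reindex _ _ _ _ _ f) // => [|i nfi]; last first.
  rewrite /B'; case: pickP => [j /eqP fj|_]; first by case: (nfi j).
  by rewrite preimage_setT probability_setT.
apply: eq_bigr => j _; case fj: (f j) => [i|]; first by rewrite (B'E _ _ fj).
rewrite (_ : _ @^-1` _ = setT) ?probability_setT //; apply/seteqP; split => // w _.
by apply: contrapT => nB; apply: Bx0; exists j.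
Qed.

Lemma indep_split2 (I : finType) (X : I -> Omega -> E) (i k : I) B1 B2 (F : I -> set E) :
  indep nE P X -> i != k -> borel nE B1 -> borel nE B2 -> (forall l, borel nE (F l)) ->
  P ((X i @^-1` B1 `&` X k @^-1` B2) `&`
     \bigcap_(l in [set l | (l != i) && (l != k)]) X l @^-1` F l) =
  (P (X i @^-1` B1) * P (X k @^-1` B2) *
   \prod_(l | (l != i) && (l != k)) P (X l @^-1` F l))%E.
Proof.
move=> hX ik hB1 hB2 hF.
pose G l := if l == i then B1 else if l == k then B2 else F l.
have Gi : G i = B1 by rewrite /G eqxx.
have Gk : G k = B2 by rewrite /G eq_sym (negbTE ik) eqxx.
have GF l : (l != i) && (l != k) -> G l = F l by rewrite /G => /andP[/negbTE -> /negbTE ->].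
have := hX G; rewrite (bigcap_split2 _ i k) Gi Gk.
rewrite (eq_bigcapr (fun l li => congr1 (preimage (X l)) (GF l li))).
move=> -> => [|l]; last by rewrite /G; case: ifP => // _; case: ifP.
rewrite (bigD1 i) // (bigD1 k) 1?eq_sym //= Gi Gk muleA; congr (_ * _)%E.
by apply: eq_big => [l|l /GF ->]; rewrite ?andbT // andbC.
Qed.

Lemma indep_block2 (I : finType) (X : I -> Omega -> E) (i k : I) B1 B2 (F : I -> set E) :
  indep nE P X -> i != k -> borel nE B1 -> borel nE B2 -> (forall l, borel nE (F l)) ->
  P ((X i @^-1` B1 `&` X k @^-1` B2) `&`
     \bigcap_(l in [set l | (l != i) && (l != k)]) X l @^-1` F l) =
  (P (X i @^-1` B1 `&` X k @^-1` B2) *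
   P (\bigcap_(l in [set l | (l != i) && (l != k)]) X l @^-1` F l))%E.
Proof.
move=> hX ik hB1 hB2 hF.
have hT (l : I) : borel nE setT by exact: borelT.
have pairE : P (X i @^-1` B1 `&` X k @^-1` B2) = (P (X i @^-1` B1) * P (X k @^-1` B2))%E.
  have := indep_split2 hX ik hB1 hB2 hT.
  rewrite (_ : \bigcap_(l in _) _ = setT) ?setIT => [->|]; last by apply/seteqP; split.
  by rewrite big1 ?mule1 // => l _; rewrite preimage_setT probability_setT.
have R0E : P (\bigcap_(l in [set l | (l != i) && (l != k)]) X l @^-1` F l) =
            (\prod_(l | (l != i) && (l != k)) P (X l @^-1` F l))%E.
  have := indep_split2 hX ik (hT i) (hT k) hF.
  by rewrite !preimage_setT setIid setTI probability_setT !mul1e.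
by rewrite indep_split2 // pairE R0E.
Qed.

Lemma setI_indep_sigma (G : set (set Omega)) (A0 : set Omega) :
  G `<=` measurable -> setI_closed G -> G setT -> measurable A0 ->
  (forall A, G A -> P (A `&` A0) = (P A * P A0)%E) ->
  forall A, <<s G >> A -> P (A `&` A0) = (P A * P A0)%E.
Proof.
move=> Gm GI GT mA0 indG A sA.
pose r : {nonneg R} := NngNum (fine_ge0 (measure_ge0 P A0)).
have rE : (r%:num)%:E = P A0 by rewrite /= fineK ?fin_num_measure.
have cover : \bigcup_(q : nat) setT = [set: Omega] by apply/seteqP; split => // w _; exists 0%N.
have fin (q : nat) : (mrestr P mA0 setT < +oo)%E.
  by rewrite /mrestr setTI (le_lt_trans (probability_le1 P mA0)) ?ltey.
have m12 B : G B -> mrestr P mA0 B = mscale r P B.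
  by move=> GB; rewrite /mrestr /mscale rE muleC indG.
have : mrestr P mA0 A = mscale r P A :=
  g_sigma_algebra_measure_unique G Gm (fun=> setT) (fun=> GT) cover _ _ GI m12 fin A sA.
by rewrite /mrestr /mscale rE muleC.
Qed.

Definition joint_events (U V : Omega -> E) : set (set Omega) :=
  [set U @^-1` B1 `&` V @^-1` B2 | B1 in borel nE & B2 in borel nE].

Lemma indep_replace (I : finType) (X : I -> Omega -> E) (i k : I) (Z : Omega -> E) :
  indep nE P X -> i != k -> (forall l, rv nE (X l)) ->
  rv nE (Z : g_sigma_algebraType (joint_events (X i) (X k)) -> E) ->
  (forall B1 B2, borel nE B1 -> borel nE B2 ->
     P (X i @^-1` B1 `&` Z @^-1` B2) = P (X i @^-1` B1 `&` X k @^-1` B2)) ->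
  indep nE P (fun l => if l == k then Z else X l).
Proof.
move=> hX ik rX rZ Zlaw B hB.
set R0 := \bigcap_(l in [set l | (l != i) && (l != k)]) X l @^-1` B l.
have mR0 : measurable R0.
  by apply: fin_bigcap_measurable => [|l _]; [exact: finite_finset | apply: rX; apply: hB].
have -> : \bigcap_l (if l == k then Z else X l) @^-1` B l =
          (X i @^-1` B i `&` Z @^-1` B k) `&` R0.
  rewrite (bigcap_split2 _ i k) (negbTE ik) eqxx; congr (_ `&` _).
  by apply: eq_bigcapr => l /andP[_ /negbTE ->].
have Gm : joint_events (X i) (X k) `<=` measurable.
  by move=> _ [B1 hB1 [B2 hB2 <-]]; apply: measurableI; apply: rX.
have GI : setI_closed (joint_events (X i) (X k)).
  move=> _ _ [B1 hB1 [B2 hB2 <-]] [B1' hB1' [B2' hB2' <-]].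
  exists (B1 `&` B1'); first exact: borelI.
  by exists (B2 `&` B2'); [exact: borelI | rewrite !preimage_setI setIACA].
have GT : joint_events (X i) (X k) setT.
  exists setT; first exact: borelT.
  by exists setT; [exact: borelT | rewrite !preimage_setT setIT].
have indG A : joint_events (X i) (X k) A -> P (A `&` R0) = (P A * P R0)%E.
  by move=> [B1 hB1 [B2 hB2 <-]]; apply: indep_block2.
have sXi : <<s joint_events (X i) (X k) >> (X i @^-1` B i).
  apply: sub_gen_smallest; exists (B i) => //.
  by exists setT; [exact: borelT | rewrite preimage_setT setIT].
have sA : <<s joint_events (X i) (X k) >> (X i @^-1` B i `&` Z @^-1` B k).
  exact: (@measurableI _ (g_sigma_algebraType (joint_events (X i) (X k))) _ _ sXi (rZ _ (hB k))).
have ZkE B2 : borel nE B2 -> P (Z @^-1` B2) = P (X k @^-1` B2).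
  move=> hB2; have := Zlaw setT B2 _ hB2; rewrite preimage_setT !setTI.
  by apply; exact: borelT.
rewrite (setI_indep_sigma Gm GI GT mR0 indG sA) Zlaw // -indep_block2 //.
have := hX B hB; rewrite (bigcap_split2 _ i k) => ->.
by apply: eq_bigr => l _; case: (eqVneq l k) => [->|//]; rewrite (ZkE _ (hB k)).
Qed.

End Independence.

Section Gaussian.
Variables (R : realType) (K : fieldType) (absK : K -> R) (E : lmodType K) (nE : E -> R).
Hypotheses (hK : nonarch_abs absK) (hE : sep_banach absK nE).

Let hN : is_norm absK nE. Proof. by case: hE. Qed.
Let hS : separable_norm nE. Proof. by case: hE. Qed.

Lemma rvZ d (T : measurableType d) (U : T -> E) (c : K) :
  rv nE U -> rv nE (fun w => c *: U w).
Proof.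
move=> rU; rewrite (_ : (fun w => _) = (fun w => c *: U w + 0 *: U w)).
  exact: (rv_lincomb hK hN _ _ hS).
by apply: funext => w; rewrite scale0r addr0.
Qed.

Lemma borel_scale (c : K) B : borel nE B -> borel nE ((fun x => c *: x) @^-1` B).
Proof.
exact: (@rvZ _ (g_sigma_algebraType (nopen nE)) idfun c (fun _ h => h)).
Qed.

Lemma borel2_scale (c : K) C :
  borel2 nE C -> borel2 nE ((fun p => (c *: p.1, c *: p.2)) @^-1` C).
Proof.
set G := [set B1 `*` B2 | B1 in borel nE & B2 in borel nE].
have r1 : rv nE (fst : g_sigma_algebraType G -> E).
  move=> B hB; apply: sub_gen_smallest; exists B => //.
  by exists setT; [exact: borelT | rewrite setXT].
have r2 : rv nE (snd : g_sigma_algebraType G -> E).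
  move=> B hB; apply: sub_gen_smallest; exists setT; first exact: borelT.
  by exists B; rewrite // setTX.
exact: (rv_pair (rvZ c r1) (rvZ c r2)).
Qed.

Variables (d : measure_display) (Omega : measurableType d) (P : probability Omega R).

Lemma K_gaussian_law (X Y : Omega -> E) :
  K_gaussian absK nE P X -> rv nE Y ->
  (forall B, borel nE B -> P (Y @^-1` B) = P (X @^-1` B)) -> K_gaussian absK nE P Y.
Proof.
move=> [_ gX] rY YX; split => // d' O' P' X1 X2 r1 r2 i12 l1 l2.
by apply: gX => // B hB; rewrite -YX ?l1 ?l2.
Qed.

Lemma K_gaussian0 : K_gaussian absK nE P (fun _ => 0).
Proof.
split; first exact: rv_cst.
move=> d' O' P' X1 X2 r1 r2 _ l1 l2 a _ C hC.
have nz : borel nE ([set~ 0]).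
  apply: borel_nopen => x x0; exists (nE x); split.
    by rewrite lt_def (nE_ge0 hK hN) andbT; apply/eqP => /(nE_eq0 hN).
  by move=> y + y0; rewrite y0 sub0r (nEN hK hN) ltxx.
have null (Xj : O' -> E) :
    (forall B, borel nE B -> P' (Xj @^-1` B) = P ((fun _ => 0) @^-1` B)) ->
    P' (Xj @^-1` [set~ 0]) = 0%E.
  move=> lj; rewrite lj // (_ : _ @^-1` _ = set0) ?measure0 //.
  by apply/seteqP; split => // w /=; apply.
set N := X1 @^-1` [set~ 0] `|` X2 @^-1` [set~ 0].
have mN : measurable N by apply: measurableU; [apply: r1 | apply: r2].
have N0 : P' N = 0%E by apply: null_set_setU; [apply: r1 | apply: r2 | apply: null ..].
apply: (measure_eq_offnull _ _ mN N0).
- by apply: rv_pair hC; apply: (rv_lincomb hK hN _ _ hS).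
- exact: rv_pair r1 r2 hC.
have off w : ~ N w -> X1 w = 0 /\ X2 w = 0.
  by move=> Nw; split; apply: contrapT => ?; apply: Nw; [left|right].
apply/seteqP; split => w [Cw /[dup] /off[z1 z2] Nw]; split => //;
  by move: Cw; rewrite /= z1 z2 !scaler0 !addr0.
Qed.

Lemma K_gaussianZ (X : Omega -> E) (c : K) :
  K_gaussian absK nE P X -> K_gaussian absK nE P (fun w => c *: X w).
Proof.
have [->|c0] := eqVneq c 0.
  have -> : (fun w => 0 *: X w) = (fun _ => 0) by apply: funext => w; rewrite scale0r.
  by move=> _; exact: K_gaussian0.
move=> [rX gX]; split; first exact: rvZ.
(* Apply the Gaussian property of [X] to the copies [c^-1 Z1] and [c^-1 Z2]. *)
move=> d' O' P' Z1 Z2 r1 r2 iZ l1 l2 a a1 C hC.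
pose W1 w := c^-1 *: Z1 w; pose W2 w := c^-1 *: Z2 w.
have iW : indep nE P' (fun j : 'I_2 => if val j == 0%N then W1 else W2).
  rewrite (_ : (fun j : 'I_2 => _) = fun j => if Some j is Some i then
      (fun x => c^-1 *: x) \o (if val i == 0%N then Z1 else Z2) else cst 0).
    apply: (indep_reindex (f := Some) (g := fun=> fun x => c^-1 *: x) (fun=> 0) iZ).
      by move=> j j' i [->] [].
    by move=> j B; apply: borel_scale.
  by apply: funext => j; case: ifP.
have lW (Z : O' -> E) :
    (forall B, borel nE B -> P' (Z @^-1` B) = P ((fun w => c *: X w) @^-1` B)) ->
    forall B, borel nE B -> P' ((fun w => c^-1 *: Z w) @^-1` B) = P (X @^-1` B).
  move=> lZ B hB; rewrite (lZ _ (borel_scale _ hB)).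
  by congr (P _); apply/seteqP; split => w /=; rewrite scalerA mulVf // scale1r.
have cK z : c *: (c^-1 *: z) = z by rewrite scalerA mulfV // scale1r.
have cKD (u v : K) z z' : c *: (u *: (c^-1 *: z) + v *: (c^-1 *: z')) = u *: z + v *: z'.
  have cu (u' : K) : c * u' * c^-1 = u' by rewrite mulrAC mulfV ?mul1r.
  by rewrite scalerDr !scalerA !cu.
have := gX d' O' P' W1 W2 (rvZ _ r1) (rvZ _ r2) iW (lW _ l1) (lW _ l2) a a1 _ (borel2_scale c hC).
congr (P' _ = P' _); apply/seteqP; split => w /=; by rewrite /W1 /W2 ?cK ?cKD.
Qed.

Definition iid_K_gaussian (I : finType) (X : I -> Omega -> E) : Prop :=
  [/\ forall i, K_gaussian absK nE P (X i),
      forall i j B, borel nE B -> P (X i @^-1` B) = P (X j @^-1` B) &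
      indep nE P X].

Lemma indep_pair (I : finType) (X : I -> Omega -> E) (i k : I) :
  indep nE P X -> i != k ->
  indep nE P (fun j : 'I_2 => if val j == 0%N then X i else X k).
Proof.
move=> hX ik.
rewrite (_ : (fun j : 'I_2 => _) = fun j => if Some (if val j == 0%N then i else k) is Some l
    then idfun \o X l else cst 0); last by apply: funext => j; case: ifP.
apply: (indep_reindex (f := fun j : 'I_2 => Some (if val j == 0%N then i else k))
  (g := fun=> idfun) (fun=> 0) hX) => // j j' l [<-] [e]; move: e.
by case: (ord2_cases j) => ->; case: (ord2_cases j') => -> //= e; rewrite e eqxx in ik.
Qed.

Lemma iid_K_gaussian_shear (I : finType) (X : I -> Omega -> E) (i k : I) (s : K) :
  iid_K_gaussian X -> i != k -> absK s <= 1 ->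
  iid_K_gaussian (fun l => if l == k then (fun w => X k w + s *: X i w) else X l).
Proof.
move=> [gX idX hX] ik s1; set Z := fun w => X k w + s *: X i w.
have rX l : rv nE (X l) by case: (gX l).
have rZ d' (T : measurableType d') (U V : T -> E) : rv nE U -> rv nE V ->
    rv nE (fun w => V w + s *: U w).
  move=> rU rV; rewrite (_ : (fun w => _) = fun w => 1 *: V w + s *: U w).
    exact: (rv_lincomb hK hN _ _ hS).
  by apply: funext => w; rewrite scale1r.
have Zlaw B1 B2 : borel nE B1 -> borel nE B2 ->
    P (X i @^-1` B1 `&` Z @^-1` B2) = P (X i @^-1` B1 `&` X k @^-1` B2).
  move=> hB1 hB2.
  have hC : borel2 nE (B1 `*` B2) by apply: sub_gen_smallest; exists B1 => //; exists B2.
  have := (gX i).2 _ _ P (X i) (X k) (rX i) (rX k) (indep_pair hX ik) (fun _ _ => erefl)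
    (fun B hB => idX k i B hB) (shear s) (shear_orthonormal hK s1) _ hC.
  move=> <-; congr (P _); apply/seteqP; split => w /=;
    by rewrite /shear /= scale1r scale0r addr0 scale1r addrC.
have ZkE B : borel nE B -> P (Z @^-1` B) = P (X k @^-1` B).
  move=> hB; have := Zlaw setT B _ hB; rewrite preimage_setT !setTI.
  by apply; exact: borelT.
split.
- move=> l; case: eqP => _; last exact: gX.
  by apply: (K_gaussian_law (gX k)) => //; apply: rZ.
- move=> l l' B hB.
  have lawE l0 : P ((if l0 == k then Z else X l0) @^-1` B) = P (X k @^-1` B).
    by case: eqP => _; [apply: ZkE | apply: idX].
  by rewrite !lawE.
apply: (indep_replace (i := i)) => //; apply: rZ => B hB; apply: sub_gen_smallest.
  by exists B => //; exists setT; [exact: borelT | rewrite preimage_setT setIT].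
by exists setT; [exact: borelT | exists B; rewrite // preimage_setT setTI].
Qed.

Lemma sum_transvection (V : lmodType K) n (l k : 'I_n) (r : K) (b : 'I_n -> K)
    (Y : 'I_n -> V) : l != k ->
  \sum_i b i *: Y i =
  \sum_i transvection l k r b i *: (if i == k then Y k + r *: Y l else Y i).
Proof.
move=> lk; rewrite !(sum_split2 _ lk) /transvection.
rewrite eqxx (negbTE lk) eq_sym (negbTE lk) eqxx; congr (_ + _).
  by rewrite scalerBl scalerDr scalerA (mulrC (b k)) addrACA addNr addr0.
by apply: eq_bigr => i /andP[/negbTE -> /negbTE ->].
Qed.

Lemma iid_K_gaussian_elementary n T (X : 'I_n -> Omega -> E) :
  elementary absK T -> iid_K_gaussian X ->
  exists2 X', iid_K_gaussian X' &
    forall a w, \sum_i a i *: X i w = \sum_i T a i *: X' i w.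
Proof.
move=> eT; elim: eT X => [|T' l k r _ IH lk r1] X iX; first by exists X.
have [X' iX' XE] := IH X iX.
exists (fun l0 => if l0 == k then (fun w => X' k w + r *: X' l w) else X' l0).
  exact: iid_K_gaussian_shear.
move=> a w; rewrite XE (sum_transvection r _ (fun i => X' i w) lk).
by apply: eq_bigr => i _ /=; case: ifP.
Qed.

End Gaussian.

Unset Implicit Arguments.

Theorem theorem4p11 (R : realType) (K : fieldType) (absK : K -> R)
  (E : lmodType K) (nE : E -> R)
  (hK : local_field absK) (hE : sep_banach absK nE)
  (d : measure_display) (Omega : measurableType d) (P : probability Omega R)
  (n m : nat) (X : 'I_n -> Omega -> E)
  (hXg : forall i, K_gaussian absK nE P (X i))
  (hXid : forall i j B, borel nE B -> P (X i @^-1` B) = P (X j @^-1` B))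
  (hXind : indep nE P X)
  (alpha : 'I_m -> 'I_n -> K) (halpha : K_orthogonal absK alpha) :
  let Y : 'I_m -> Omega -> E :=
    fun j w => \sum_(i < n) alpha j i *: X i w in
  (forall j, K_gaussian absK nE P (Y j)) /\ indep nE P Y.
Proof.
move=> Y; have [hK' _ _] := hK.
have [T [s [c [eT [TalphaE _ sinj]]]]] := K_orthogonal_monomial hK' halpha.
have iX : iid_K_gaussian absK nE P X by split.
have [X' [gX' _ iX'] XE] := iid_K_gaussian_elementary hK' hE eT iX.
have -> : Y = fun j => if s j is Some k then (fun x => c j *: x) \o X' k else cst 0.
  apply: funext => j; apply: funext => w; rewrite /Y XE.
  under eq_bigr do rewrite TalphaE.
  by rewrite sum_monomial; case: (s j).
split.
  move=> j; case: (s j) => [k|]; [exact: (K_gaussianZ hK' hE) | exact: (K_gaussian0 hK' hE)].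
by apply: (indep_reindex (fun=> 0) iX' sinj) => j B; apply: (borel_scale hK' hE).
Qed.
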